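(* Let $n\in[0,\frac72]$, $\varepsilon>0$ and $h_\varepsilon(s):=\frac{s^{5-n}}{s^{4-n}+\varepsilon}$ for $s\ge0$. Then $$0\le h_\varepsilon(s)\le s\quad\text{and}\quad0\le h_\varepsilon'(s)\le5-n\qquad\text{for all }s\ge0,$$ and moreover $$|h_\varepsilon''(s)|\le2^{-\frac{7-2n}{2(4-n)}}(4-n)(5-n)\,\varepsilon^{\frac{1}{2(4-n)}}s^{-3/2}\qquad\text{for all }s>0.$$ *)

From Stdlib Require Import Reals.
From Coquelicot Require Import Coquelicot.
Open Scope R_scope.

(* Real power s^a for s >= 0, with the convention 0^a = 0 (used only for
   a > 0 here).  For s < 0 the value is irrelevant (set to 0). *)
Definition rpow (s a : R) : R := if Rle_dec s 0 then 0 else Rpower s a.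

Definition h_eps (n eps : R) (s : R) : R :=
  rpow s (5 - n) / (rpow s (4 - n) + eps).

From Stdlib Require Import Reals Lra Psatz.
From Coquelicot Require Import Coquelicot.
Open Scope R_scope.

(* With m = 4 - n, write h_eps(s) = s w(s) where w = s^m / (s^m + eps) takes
   values in (0, 1) and satisfies s w' = m w (1 - w).  Hence
   h' = w + m w (1 - w) lies in [0, m + 1], h' -> 0 at 0+, and
   h'' = (m / s) w (1 - w) (1 + m (1 - 2 w)), so |h''| <= m (m + 1) w (1 - w) / s.
   With a = 1 / (2 m) <= 1 one has
   w (1 - w) = w^(1+a) (1 - w)^(1-a) ((1 - w) / w)^a, where
   w^(1+a) (1 - w)^(1-a) = (w (1 - w))^(1-a) w^(2a) <= 2^(a-1)
   and ((1 - w) / w)^a = eps^a s^(-1/2). *)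

Lemma Rpower_gt_0 (x y : R) : 0 < Rpower x y.
Proof. apply exp_pos. Qed.

Lemma Rpower_1_l (y : R) : Rpower 1 y = 1.
Proof. unfold Rpower. rewrite ln_1, Rmult_0_r. apply exp_0. Qed.

Lemma Rpower_prod_complement_le (u a : R) : 0 < u < 1 -> 0 <= a <= 1 ->
  Rpower u (1 + a) * Rpower (1 - u) (1 - a) <= Rpower 2 (a - 1).
Proof.
  intros Hu Ha.
  assert (Hsplit : Rpower u (1 + a) * Rpower (1 - u) (1 - a)
                   = Rpower (u * (1 - u)) (1 - a) * Rpower u (2 * a)).
  { replace (1 + a) with ((1 - a) + 2 * a) by ring.
    rewrite Rpower_plus, <- Rpower_mult_distr by lra. ring. }
  assert (Hamgm : Rpower (u * (1 - u)) (1 - a) <= Rpower 2 (a - 1)).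
  { apply Rle_trans with (Rpower (/ 2) (1 - a)).
    - apply Rle_Rpower_l; nra.
    - unfold Rpower. rewrite ln_Rinv by lra. right. f_equal. ring. }
  assert (Hu_pow : Rpower u (2 * a) <= 1).
  { rewrite <- (Rpower_1_l (2 * a)). apply Rle_Rpower_l; lra. }
  rewrite Hsplit, <- (Rmult_1_r (Rpower 2 (a - 1))).
  apply Rmult_le_compat; auto; left; apply Rpower_gt_0.
Qed.

Lemma mul_eq_Rpower_odds (x y a : R) : 0 < x -> 0 < y ->
  x * y = Rpower x (1 + a) * Rpower y (1 - a) * Rpower (y / x) a.
Proof.
  intros Hx Hy. unfold Rpower. rewrite ln_div by lra. rewrite <- !exp_plus.
  replace ((1 + a) * ln x + (1 - a) * ln y + a * (ln y - ln x))
    with (ln x + ln y) by ring.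
  rewrite exp_plus, !exp_ln; lra.
Qed.

Lemma is_derive_n_2_loc (f f' : R -> R) (s l : R) :
  locally s (fun x => is_derive f x (f' x)) -> is_derive f' s l ->
  is_derive_n f 2 s l.
Proof.
  intros Hf' Hf''. simpl.
  apply is_derive_ext_loc with f'; [|exact Hf''].
  apply filter_imp with (2 := Hf'). intros x Hx. symmetry.
  exact (is_derive_unique _ _ _ Hx).
Qed.

Lemma Rpower_at_right_0 (m : R) : 0 < m ->
  filterlim (fun s => Rpower s m) (at_right 0) (locally 0).
Proof.
  intros Hm. apply filterlim_locally. intros e.
  exists (mkposreal _ (Rpower_gt_0 e (/ m))). intros s Hs Hs_pos.
  change (Rabs (s - 0) < Rpower e (/ m)) in Hs.
  change (Rabs (Rpower s m - 0) < e).
  rewrite Rminus_0_r, Rabs_pos_eq in Hs by lra.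
  rewrite Rminus_0_r, Rabs_pos_eq by (left; apply Rpower_gt_0).
  rewrite <- (Rpower_1 e) by apply cond_pos.
  replace 1 with (/ m * m) by (field; lra).
  rewrite <- Rpower_mult. apply Rlt_Rpower_l; lra.
Qed.

Section Weight.

Variables m eps : R.
Hypothesis eps_pos : 0 < eps.

Definition weight (s : R) : R := Rpower s m / (Rpower s m + eps).

Definition h_slope (s : R) : R :=
  weight s + m * weight s * (1 - weight s).

Definition h_curvature (s : R) : R :=
  m / s * weight s * (1 - weight s) * (1 + m * (1 - 2 * weight s)).

Lemma weight_bounds (s : R) : 0 < weight s < 1.
Proof.
  pose proof (Rpower_gt_0 s m). unfold weight. split.
  - apply Rdiv_lt_0_compat; lra.
  - apply Rmult_lt_reg_r with (Rpower s m + eps); [lra|].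
    unfold Rdiv. rewrite Rmult_assoc, Rinv_l; lra.
Qed.

Lemma weight_odds (s : R) : 0 < s ->
  (1 - weight s) / weight s = eps * Rpower s (- m).
Proof.
  intros Hs. pose proof (Rpower_gt_0 s m). rewrite Rpower_Ropp.
  unfold weight. field. split; lra.
Qed.

Lemma is_derive_weight (s : R) : 0 < s ->
  is_derive weight s (m / s * weight s * (1 - weight s)).
Proof.
  intros Hs. pose proof (Rpower_gt_0 s m). unfold weight, Rpower in *.
  auto_derive; [repeat split; lra|]. field. split; lra.
Qed.

Lemma is_derive_mul_weight (s : R) : 0 < s ->
  is_derive (fun x => x * weight x) s (h_slope s).
Proof.
  intros Hs.
  pose proof (is_derive_mult (fun x => x) weight s 1 _ (is_derive_id s)
               (is_derive_weight s Hs) Rmult_comm) as Hd.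
  replace (h_slope s)
    with (1 * weight s + s * (m / s * weight s * (1 - weight s))).
  - exact Hd.
  - unfold h_slope. field. lra.
Qed.

Lemma is_derive_h_slope (s : R) : 0 < s ->
  is_derive h_slope s (h_curvature s).
Proof.
  intros Hs.
  assert (Hq : is_derive (fun w => w + m * w * (1 - w)) (weight s)
                 (1 + m * (1 - 2 * weight s))).
  { auto_derive; [exact I | ring]. }
  exact (is_derive_comp _ weight s _ _ Hq (is_derive_weight s Hs)).
Qed.

Lemma h_slope_bounds (s : R) : 0 <= m -> 0 <= h_slope s <= m + 1.
Proof.
  intros Hm. unfold h_slope. destruct (weight_bounds s) as [Hw0 Hw1].
  set (w := weight s) in *.
  assert (0 <= m * w * (1 - w)) by (apply Rmult_le_pos; nra).
  assert (m * w * (1 - w) <= m) by nra.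
  lra.
Qed.

Lemma weight_at_right_0 : 0 < m -> filterlim weight (at_right 0) (locally 0).
Proof.
  intros Hm.
  replace 0 with (0 / (0 + eps)) at 2 by (field; lra).
  apply (filterlim_comp _ _ _ (fun s => Rpower s m) (fun p => p / (p + eps))
           _ (locally 0)).
  - apply Rpower_at_right_0, Hm.
  - apply (ex_derive_continuous (fun p : R => p / (p + eps))).
    auto_derive. lra.
Qed.

Lemma weight_var_le (s : R) : 1 / 2 <= m -> 0 < s ->
  weight s * (1 - weight s)
  <= Rpower 2 (1 / (2 * m) - 1) * Rpower eps (1 / (2 * m)) * Rpower s (- (1 / 2)).
Proof.
  intros Hm Hs. set (a := 1 / (2 * m)).
  assert (Ha : 0 <= a <= 1).
  { unfold a. split; [left; apply Rdiv_lt_0_compat; lra|].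
    apply Rmult_le_reg_r with (2 * m); [lra|]. field_simplify; lra. }
  assert (Hodds : Rpower ((1 - weight s) / weight s) a
                  = Rpower eps a * Rpower s (- (1 / 2))).
  { rewrite weight_odds, <- Rpower_mult_distr, Rpower_mult by
      (auto using Rpower_gt_0).
    replace (- m * a) with (- (1 / 2)) by (unfold a; field; lra). reflexivity. }
  pose proof (weight_bounds s) as Hw.
  rewrite (mul_eq_Rpower_odds (weight s) (1 - weight s) a), Hodds by lra.
  rewrite (Rmult_assoc (Rpower 2 (a - 1))). apply Rmult_le_compat_r.
  - left. apply Rmult_lt_0_compat; apply Rpower_gt_0.
  - apply Rpower_prod_complement_le; lra.
Qed.

Lemma h_curvature_le (s : R) : 1 / 2 <= m -> 0 < s ->
  Rabs (h_curvature s)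
  <= Rpower 2 (- ((2 * m - 1) / (2 * m))) * m * (m + 1)
     * Rpower eps (1 / (2 * m)) * Rpower s (- (3 / 2)).
Proof.
  intros Hm Hs. destruct (weight_bounds s) as [Hw0 Hw1].
  assert (Hfactor : Rabs (1 + m * (1 - 2 * weight s)) <= m + 1).
  { apply Rabs_le. split; nra. }
  assert (Hs32 : Rpower s (- (3 / 2)) = / s * Rpower s (- (1 / 2))).
  { rewrite !Rpower_Ropp. replace (3 / 2) with (1 + 1 / 2) by field.
    rewrite Rpower_plus, Rpower_1 by exact Hs.
    pose proof (Rpower_gt_0 s (1 / 2)). field. split; lra. }
  assert (Hexp : - ((2 * m - 1) / (2 * m)) = 1 / (2 * m) - 1) by (field; lra).
  unfold h_curvature.
  replace (m / s * weight s * (1 - weight s) * (1 + m * (1 - 2 * weight s)))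
    with (m / s * (weight s * (1 - weight s)) * (1 + m * (1 - 2 * weight s)))
    by ring.
  assert (Hms : 0 <= m / s) by (apply Rdiv_le_0_compat; lra).
  rewrite Rabs_mult, (Rabs_pos_eq (m / s * _)) by (apply Rmult_le_pos; nra).
  apply Rle_trans with (m / s * (Rpower 2 (1 / (2 * m) - 1) * Rpower eps (1 / (2 * m))
                                 * Rpower s (- (1 / 2))) * (m + 1)).
  - apply Rmult_le_compat; try (apply Rmult_le_pos; nra); try apply Rabs_pos.
    + apply Rmult_le_compat_l; [exact Hms | apply weight_var_le; assumption].
    + exact Hfactor.
  - right. rewrite Hs32, Hexp. field. lra.
Qed.

End Weight.

Lemma h_eps_0 (n eps : R) : h_eps n eps 0 = 0.
Proof. unfold h_eps, rpow. destruct (Rle_dec 0 0); [|lra]. unfold Rdiv. ring. Qed.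

Lemma h_eps_eq (n eps s : R) : 0 < s -> h_eps n eps s = s * weight (4 - n) eps s.
Proof.
  intros Hs. unfold h_eps, rpow, weight.
  destruct (Rle_dec s 0); [lra|].
  replace (5 - n) with (1 + (4 - n)) by ring.
  rewrite Rpower_plus, Rpower_1 by exact Hs. unfold Rdiv. ring.
Qed.

Lemma h_eps_eq_near (n eps s : R) : 0 < s ->
  locally s (fun x => x * weight (4 - n) eps x = h_eps n eps x).
Proof.
  intros Hs. apply filter_imp with (fun x => 0 < x); [|exact (open_gt 0 s Hs)].
  intros x Hx. symmetry. apply h_eps_eq, Hx.
Qed.

Lemma h_eps_between (n eps s : R) : 0 < eps -> 0 <= s -> 0 <= h_eps n eps s <= s.
Proof.
  intros Heps [Hs|<-]; [|rewrite h_eps_0; lra].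
  rewrite h_eps_eq by exact Hs. pose proof (weight_bounds (4 - n) eps Heps s).
  split; nra.
Qed.

Lemma h_eps_right_slope_0 (n eps : R) : n < 4 -> 0 < eps ->
  filterlim (fun t => (h_eps n eps t - h_eps n eps 0) / t) (at_right 0) (locally 0).
Proof.
  intros Hn Heps.
  apply filterlim_ext_loc with (weight (4 - n) eps).
  - unfold at_right, within. apply filter_forall. intros t Ht.
    rewrite h_eps_0, h_eps_eq by exact Ht. field. lra.
  - apply weight_at_right_0; lra.
Qed.

Lemma is_derive_h_eps (n eps s : R) : 0 < eps -> 0 < s ->
  is_derive (h_eps n eps) s (h_slope (4 - n) eps s).
Proof.
  intros Heps Hs.
  apply is_derive_ext_loc with (fun x => x * weight (4 - n) eps x).
  - apply h_eps_eq_near, Hs.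
  - apply is_derive_mul_weight; assumption.
Qed.

Lemma is_derive_n_h_eps (n eps s : R) : 0 < eps -> 0 < s ->
  is_derive_n (h_eps n eps) 2 s (h_curvature (4 - n) eps s).
Proof.
  intros Heps Hs. apply is_derive_n_2_loc with (h_slope (4 - n) eps).
  - apply filter_imp with (fun x => 0 < x); [|exact (open_gt 0 s Hs)].
    intros x Hx. apply is_derive_h_eps; assumption.
  - apply is_derive_h_slope; assumption.
Qed.

Theorem lemma6p1 (n eps : R) (hn0 : 0 <= n) (hn1 : n <= 7 / 2) (heps : 0 < eps) :
  (forall s : R, 0 <= s -> 0 <= h_eps n eps s /\ h_eps n eps s <= s)
  /\
  (* at the endpoint s = 0: the (right) derivative exists and lies in [0, 5-n] *)
  (exists d : R,
      filterlim (fun t => (h_eps n eps t - h_eps n eps 0) / t) (at_right 0) (locally d)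
      /\ 0 <= d /\ d <= 5 - n)
  /\
  (forall s : R, 0 < s ->
      ex_derive (h_eps n eps) s /\
      0 <= Derive (h_eps n eps) s /\ Derive (h_eps n eps) s <= 5 - n)
  /\
  (forall s : R, 0 < s ->
      ex_derive_n (h_eps n eps) 2 s /\
      Rabs (Derive_n (h_eps n eps) 2 s) <=
        Rpower 2 (- ((7 - 2 * n) / (2 * (4 - n)))) * (4 - n) * (5 - n)
        * Rpower eps (1 / (2 * (4 - n))) * Rpower s (- (3 / 2))).
Proof.
  replace (5 - n) with (4 - n + 1) by ring.
  replace (7 - 2 * n) with (2 * (4 - n) - 1) by ring.
  split; [|split; [|split]].
  - intros s Hs. apply h_eps_between; assumption.
  - exists 0. split; [apply h_eps_right_slope_0|]; lra.
  - intros s Hs. pose proof (is_derive_h_eps n eps s heps Hs) as Hd.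
    split; [eexists; exact Hd|].
    rewrite (is_derive_unique _ _ _ Hd). apply h_slope_bounds; lra.
  - intros s Hs. pose proof (is_derive_n_h_eps n eps s heps Hs) as Hd2.
    split; [eexists; exact Hd2|].
    rewrite (is_derive_n_unique _ _ _ _ Hd2). apply h_curvature_le; lra.
Qed.
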